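(* Every element of $\mathcal{R}$ with small support lies in the commutator subgroup $[\mathcal{R},\mathcal{R}]$.
   Context: $\mathcal{R}$ is the group of rational homeomorphisms of $\{0,1\}^\omega$: those $f$ for which there is a finite asynchronous binary transducer $(S,s_0,t,o)$ ($S$ finite, $t\colon S\times\{0,1\}\to S$, $o\colon S\times\{0,1\}\to\{0,1\}^*$) with $f(\psi)=o(s_0,\psi)$, where for $\sigma_1\sigma_2\cdots$ one sets $s_1=s_0$, $s_{n+1}=t(s_n,\sigma_n)$ and $o(s_0,\sigma_1\sigma_2\cdots)=o(s_1,\sigma_1)o(s_2,\sigma_2)\cdots$. An element $f$ has small support if there is a proper nonempty clopen subset $E\subseteq\{0,1\}^\omega$ such that $f$ is the identity on the complement of $E$. *)

From mathcomp Require Import all_boot.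
Set Implicit Arguments. Unset Strict Implicit. Unset Printing Implicit Defensive.

Definition cantor := nat -> bool.

Definition agree (n : nat) (x y : cantor) : Prop := forall i, i < n -> x i = y i.

Definition cantor_continuous (f : cantor -> cantor) : Prop :=
  forall x n, exists m, forall y, agree m x y -> agree n (f x) (f y).

Definition cantor_homeo (f : cantor -> cantor) : Prop :=
  cantor_continuous f /\
  exists g : cantor -> cantor, cantor_continuous g /\
    (forall x, g (f x) =1 x) /\ (forall x, f (g x) =1 x).

(* Asynchronous binary transducer (S, s0, t, o).
   state_at s0 t psi k = s_{k+1} (paper indexing, psi 0 = sigma_1). *)
Fixpoint state_at (S : Type) (s0 : S) (t : S -> bool -> S) (psi : cantor) (k : nat) : S :=
  match k with
  | 0 => s0
  | k'.+1 => t (state_at s0 t psi k') (psi k')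
  end.

Definition out_prefix (S : Type) (s0 : S) (t : S -> bool -> S)
    (o : S -> bool -> seq bool) (psi : cantor) (n : nat) : seq bool :=
  flatten [seq o (state_at s0 t psi k) (psi k) | k <- iota 0 n].

(* o(s0, psi) = w as infinite words: every finite output prefix is a prefix of w,
   and the output is infinite. *)
Definition transducer_outputs (S : Type) (s0 : S) (t : S -> bool -> S)
    (o : S -> bool -> seq bool) (psi : cantor) (w : cantor) : Prop :=
  (forall n i, i < size (out_prefix s0 t o psi n) ->
      nth false (out_prefix s0 t o psi n) i = w i) /\
  (forall m, exists n, m <= size (out_prefix s0 t o psi n)).

Definition rational_map (f : cantor -> cantor) : Prop :=
  exists (S : finType) (s0 : S) (t : S -> bool -> S) (o : S -> bool -> seq bool),
    forall psi, transducer_outputs s0 t o psi (f psi).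

Definition in_R (f : cantor -> cantor) : Prop := cantor_homeo f /\ rational_map f.

Definition is_R_commutator (c : cantor -> cantor) : Prop :=
  exists g h gi hi : cantor -> cantor,
    [/\ in_R g, in_R h,
        (forall x, gi (g x) =1 x) /\ (forall x, g (gi x) =1 x),
        (forall x, hi (h x) =1 x) /\ (forall x, h (hi x) =1 x) &
        forall x, c x =1 gi (hi (g (h x)))].

(* the commutator subgroup [R,R]: finite products of commutators
   (the inverse of a commutator is a commutator) *)
Inductive in_commutator_subgroup : (cantor -> cantor) -> Prop :=
| comm_id f : (forall x, f x =1 x) -> in_commutator_subgroup f
| comm_step f g c : in_commutator_subgroup g -> is_R_commutator c ->
    (forall x, f x =1 g (c x)) -> in_commutator_subgroup f.

Definition cantor_open (U : cantor -> Prop) : Prop :=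
  forall x, U x -> exists n, forall y, agree n x y -> U y.
Definition cantor_clopen (E : cantor -> Prop) : Prop :=
  cantor_open E /\ cantor_open (fun x => ~ E x).

Definition small_support (f : cantor -> cantor) : Prop :=
  exists E : cantor -> Prop,
    [/\ cantor_clopen E, (exists x, E x), (exists y, ~ E y) &
        forall x, ~ E x -> f x =1 x].

From mathcomp Require Import all_boot zify.
From Stdlib Require Import FunctionalExtensionality.
Set Implicit Arguments. Unset Strict Implicit. Unset Printing Implicit Defensive.

(* Since f is the identity on a cylinder [p], it fixes the two disjoint cylinders [u]
   and [w] with u = p1, w = p0, and it preserves their complement. Let g = slide w u,
   which maps x to u x whenever x does not start with w, and let h map u^k y to u^k f(y)
   for k >= 1 and y in neither cylinder, fixing every other point: h is the product of
   the conjugates of f by the prefix maps x |-> u^k x, whose supports are disjoint.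
   Then h o g = g o h o f, i.e. f = h^-1 o g^-1 o h o g. Both g and h are rational: a transducer
   for h strips the leading blocks u and then runs the transducer of f. *)

Definition pref (n : nat) (x : cantor) : seq bool := mkseq x n.

Definition prepend (p : seq bool) (x : cantor) : cantor :=
  fun i => if i < size p then nth false p i else x (i - size p).

Definition shift (n : nat) (x : cantor) : cantor := fun i => x (n + i).

Lemma size_pref n x : size (pref n x) = n.
Proof. exact: size_mkseq. Qed.

Lemma nth_pref n x i : i < n -> nth false (pref n x) i = x i.
Proof. exact: nth_mkseq. Qed.

Lemma prefS n x : pref n.+1 x = rcons (pref n x) (x n).
Proof. exact: mkseqS. Qed.

Lemma agree_pref n x y : agree n x y <-> pref n x = pref n y.
Proof.
split=> [xy | Exy i lt_in]; last by rewrite -(nth_pref x lt_in) -(nth_pref y lt_in) Exy.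
apply: (@eq_from_nth _ false); rewrite ?size_pref // => i lt_in.
by rewrite !nth_pref ?xy.
Qed.

Lemma agree_le m n x y : n <= m -> agree m x y -> agree n x y.
Proof. by move=> le_nm xy i lt_in; apply/xy/(leq_trans lt_in). Qed.

Lemma agree_shift m n x y : agree (m + n) x y -> agree n (shift m x) (shift m y).
Proof. by move=> xy i lt_in; apply: xy; rewrite ltn_add2l. Qed.

Lemma agree_prepend_pref n x y : agree n x (prepend (pref n x) y).
Proof. by move=> i lt_in; rewrite /prepend size_pref lt_in nth_pref. Qed.

Lemma pref_agree m n x y : n <= m -> agree m x y -> pref n x = pref n y.
Proof. by move=> le_nm /(agree_le le_nm)/agree_pref. Qed.

Lemma prepend_pref_shift n x : prepend (pref n x) (shift n x) = x.
Proof.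
apply: functional_extensionality => i; rewrite /prepend /shift size_pref.
by case: ltnP => [/nth_pref | /subnKC ->].
Qed.

Lemma prepend_shift_pref n p x : pref n x = p -> prepend p (shift n x) = x.
Proof. by move=> <-; apply: prepend_pref_shift. Qed.

Lemma pref_prepend n p y : size p = n -> pref n (prepend p y) = p.
Proof.
move=> <-; apply: (@eq_from_nth _ false); rewrite ?size_pref // => i lt_ip.
by rewrite nth_pref // /prepend lt_ip.
Qed.

Lemma shift_prepend n p y : size p = n -> shift n (prepend p y) = y.
Proof.
move=> <-; apply: functional_extensionality => i.
by rewrite /shift /prepend ltnNge leq_addr addKn.
Qed.

Lemma prepend_cat p q y : prepend p (prepend q y) = prepend (p ++ q) y.
Proof.
apply: functional_extensionality => i; rewrite /prepend size_cat nth_cat.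
by case: (ltnP i (size p)) => [/ltn_addr -> | le_pi]; rewrite ?ltn_subLR ?subnDA.
Qed.

Lemma shift_shift m n x : shift m (shift n x) = shift (n + m) x.
Proof. by apply: functional_extensionality => i; rewrite /shift addnA. Qed.

Lemma pref_add m n x : pref (m + n) x = pref m x ++ pref n (shift m x).
Proof.
apply: (@eq_from_nth _ false); rewrite ?size_cat ?size_pref // => i lt_i.
rewrite nth_pref // nth_cat size_pref; case: ltnP => [/nth_pref // | le_mi].
by rewrite nth_pref ?ltn_subLR // /shift subnKC.
Qed.

Section Transducer.

Variables (S : Type) (t : S -> bool -> S) (o : S -> bool -> seq bool).

Lemma state_at_add s x m n :
  state_at s t x (m + n) = state_at (state_at s t x m) t (shift m x) n.
Proof. by elim: n => [|n IHn] /=; rewrite ?addn0 // addnS /= IHn. Qed.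

Lemma out_prefix_add s x m n :
  out_prefix s t o x (m + n) =
  out_prefix s t o x m ++ out_prefix (state_at s t x m) t o (shift m x) n.
Proof.
rewrite /out_prefix iotaD map_cat flatten_cat add0n; congr (_ ++ _).
rewrite -[in LHS](addn0 m) iotaDl -map_comp; congr flatten.
by apply: eq_map => k /=; rewrite state_at_add.
Qed.

Lemma out_prefixS s x n :
  out_prefix s t o x n.+1 = out_prefix s t o x n ++ o (state_at s t x n) (x n).
Proof. by rewrite -addn1 out_prefix_add /out_prefix /= cats0 /shift addn0. Qed.

Lemma out_prefix_le s x n m : n <= m ->
  exists r, out_prefix s t o x m = out_prefix s t o x n ++ r.
Proof. by move=> /subnKC <-; rewrite out_prefix_add; eexists. Qed.

Lemma state_at_agree s x y n k : agree n x y -> k <= n ->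
  state_at s t x k = state_at s t y k.
Proof. by move=> xy; elim: k => [|k IHk] lt_kn //=; rewrite IHk ?(ltnW lt_kn) ?xy. Qed.

Lemma out_prefix_agree s x y n : agree n x y ->
  out_prefix s t o x n = out_prefix s t o y n.
Proof.
move=> xy; congr flatten; apply/eq_in_map => k.
rewrite mem_iota add0n => /andP[_ lt_kn].
by rewrite (state_at_agree s xy (ltnW lt_kn)) xy.
Qed.

Definition outputs_upto (k : nat) (s : S) (x w : cantor) : Prop :=
  (forall n i, i < k -> i < size (out_prefix s t o x n) ->
     nth false (out_prefix s t o x n) i = w i) /\
  exists n, k <= size (out_prefix s t o x n).

Lemma outputsP s x w :
  transducer_outputs s t o x w <-> forall k, outputs_upto k s x w.
Proof.
split=> [[out_w out_inf] k | upto]; first by split=> [n i _|]; [apply: out_w|].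
by split=> [n i|k]; [case: (upto i.+1) => + _; apply | case: (upto k)].
Qed.

Lemma outputs_upto_le k l s x w : l <= k -> outputs_upto k s x w -> outputs_upto l s x w.
Proof.
move=> le_lk [out_w [n le_kn]]; split; last by exists n; apply: leq_trans le_kn.
by move=> n' i lt_il; apply/out_w/(leq_trans lt_il).
Qed.

Lemma outputs_upto_prepend s x m k w :
  outputs_upto k (state_at s t x m) (shift m x) w ->
  outputs_upto (size (out_prefix s t o x m) + k) s x
    (prepend (out_prefix s t o x m) w).
Proof.
set q := out_prefix s t o x m => -[out_w [n le_kn]]; split; last first.
  by exists (m + n); rewrite out_prefix_add size_cat leq_add2l.
move=> n' i lt_ik; case: (leqP n' m) => [le_nm | /ltnW/subnKC <-].
  have [r qE] := out_prefix_le s x le_nm => lt_i.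
  by rewrite /prepend /q qE size_cat ltn_addr // nth_cat lt_i.
rewrite out_prefix_add -/q size_cat nth_cat /prepend => lt_i.
by case: ltnP => // le_qi; apply: out_w; rewrite ?ltn_subLR.
Qed.

Lemma outputs_prepend s x m w :
  transducer_outputs (state_at s t x m) t o (shift m x) w ->
  transducer_outputs s t o x (prepend (out_prefix s t o x m) w).
Proof.
move=> /outputsP out_w; apply/outputsP => k.
exact/(outputs_upto_le (leq_addl _ _))/outputs_upto_prepend.
Qed.

Lemma outputs_shift s x m w :
  transducer_outputs s t o x w -> exists w',
  w = prepend (out_prefix s t o x m) w' /\
  transducer_outputs (state_at s t x m) t o (shift m x) w'.
Proof.
set q := out_prefix s t o x m => -[out_w out_inf]; exists (shift (size q) w); split.
  apply: functional_extensionality => i; rewrite /prepend /shift.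
  by case: ltnP => [lt_iq | /subnKC ->]; rewrite ?out_w.
split=> [n i lt_i | k].
  rewrite /shift -(out_w (m + n)); last by rewrite out_prefix_add size_cat ltn_add2l.
  by rewrite out_prefix_add nth_cat ltnNge leq_addr addKn.
have [n le_n] := out_inf (size q + k); exists (n - m).
case: (leqP n m) => [le_nm | /ltnW/subnKC nE].
  have [r qE] := out_prefix_le s x le_nm.
  by move: le_n; rewrite /q qE size_cat; lia.
by move: le_n; rewrite -nE out_prefix_add size_cat leq_add2l addKn.
Qed.

Lemma outputs_coind (P : S -> cantor -> cantor -> Prop) :
  (forall s x w, P s x w -> transducer_outputs s t o x w \/
     exists m w', [/\ 0 < size (out_prefix s t o x m),
        w = prepend (out_prefix s t o x m) w' & P (state_at s t x m) (shift m x) w']) ->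
  forall s x w, P s x w -> transducer_outputs s t o x w.
Proof.
move=> stepP s x w Psxw; apply/outputsP => k.
elim: k s x w Psxw => [|k IHk] s x w /stepP [/outputsP //| [m [w' [lt0q -> Pw']]]].
  by split=> //; exists 0.
by apply: outputs_upto_le (outputs_upto_prepend (IHk _ _ _ Pw')); lia.
Qed.

Lemma continuous_of_outputs (f : cantor -> cantor) s :
  (forall x, transducer_outputs s t o x (f x)) -> cantor_continuous f.
Proof.
move=> out_f x n; have [out_x /(_ n)[m le_nm]] := out_f x.
exists m => y xy i lt_in; have [out_y _] := out_f y.
have qE := out_prefix_agree s xy.
have lt_im : i < size (out_prefix s t o x m) by apply: leq_trans le_nm.
by rewrite -(out_x m i lt_im) -(out_y m i) -qE.
Qed.

End Transducer.

Lemma out_prefix_morph (S1 S2 : Type) (t1 : S1 -> bool -> S1) (o1 : S1 -> bool -> seq bool)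
    (t2 : S2 -> bool -> S2) (o2 : S2 -> bool -> seq bool) (phi : S1 -> S2) :
  (forall s c, t2 (phi s) c = phi (t1 s c)) -> (forall s c, o2 (phi s) c = o1 s c) ->
  forall s x n, out_prefix (phi s) t2 o2 x n = out_prefix s t1 o1 x n.
Proof.
move=> phi_t phi_o s x n.
have phi_state k : state_at (phi s) t2 x k = phi (state_at s t1 x k).
  by elim: k => //= k ->; rewrite phi_t.
by congr flatten; apply: eq_map => k; rewrite phi_state phi_o.
Qed.

Lemma outputs_morph (S1 S2 : Type) (t1 : S1 -> bool -> S1) (o1 : S1 -> bool -> seq bool)
    (t2 : S2 -> bool -> S2) (o2 : S2 -> bool -> seq bool) (phi : S1 -> S2) :
  (forall s c, t2 (phi s) c = phi (t1 s c)) -> (forall s c, o2 (phi s) c = o1 s c) ->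
  forall s x w, transducer_outputs (phi s) t2 o2 x w <-> transducer_outputs s t1 o1 x w.
Proof.
move=> phi_t phi_o s x w; have out_phi := out_prefix_morph phi_t phi_o s x.
split=> -[out_w out_inf]; split=> [n i | m].
- by rewrite -out_phi; apply: out_w.
- by have [n] := out_inf m; exists n; rewrite -out_phi.
- by rewrite out_phi; apply: out_w.
- by have [n] := out_inf m; exists n; rewrite out_phi.
Qed.

Lemma outputs_copy (S : Type) (t : S -> bool -> S) (o : S -> bool -> seq bool) s :
  (forall c, t s c = s) -> (forall c, o s c = [:: c]) ->
  forall x, transducer_outputs s t o x x.
Proof.
move=> t_s o_s x.
have out_pref n : out_prefix s t o x n = pref n x.
  elim: n => // n IHn; rewrite out_prefixS IHn prefS -cats1 -o_s.
  by congr (_ ++ o _ _); elim: n {IHn} => //= n ->.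
split=> [n i | m]; last by exists m; rewrite out_pref size_pref.
by rewrite out_pref size_pref; apply: nth_pref.
Qed.

Lemma rational_of_closed_states (T : choiceType) (s0 : T) (t : T -> bool -> T)
    (o : T -> bool -> seq bool) (states : seq T) (f : cantor -> cantor) :
  s0 \in states -> (forall s c, s \in states -> t s c \in states) ->
  (forall x, transducer_outputs s0 t o x (f x)) -> rational_map f.
Proof.
move=> s0_in t_in out_f.
pose tS (s : seq_sub states) c := SeqSub (t_in (ssval s) c (ssvalP s)).
exists (seq_sub states), (SeqSub s0_in), tS, (fun s => o (ssval s)) => x.
exact: (@outputs_morph _ _ tS _ t o (@ssval _ states)
  (fun _ _ => erefl) (fun _ _ => erefl) _ x _).1.
Qed.

Lemma continuous_of_rational f : rational_map f -> cantor_continuous f.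
Proof. by move=> [S [s0 [t [o out_f]]]]; apply: continuous_of_outputs out_f. Qed.

Definition short_words (K : nat) : seq (seq bool) :=
  flatten [seq map val (enum {: k.-tuple bool}) | k <- iota 0 K].

Lemma mem_short_words K p : (p \in short_words K) = (size p < K).
Proof.
apply/flatten_mapP/idP => [[k] | lt_pK].
  by rewrite mem_iota add0n => /andP[_ +] /mapP[q _ ->]; rewrite size_tuple.
by exists (size p); rewrite ?mem_iota //; apply/mapP; exists (in_tuple p); rewrite ?mem_enum.
Qed.

(* In a state [inl (i, buf)] the machine buffers a block of [K] letters; once the
   block [p] is complete it outputs [emit i p] and moves to [next i p], which either
   starts a new block or hands over to the machine [(tA, oA)]. *)
Section BlockMachine.

Variables (I A : Type) (tA : A -> bool -> A) (oA : A -> bool -> seq bool).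
Variables (K : nat) (next : I -> seq bool -> I + A) (emit : I -> seq bool -> seq bool).
Hypothesis K_gt0 : 0 < K.

Definition block_state := (I * seq bool + A)%type.

Definition block_enter (j : I + A) : block_state :=
  match j with inl i => inl (i, [::]) | inr a => inr a end.

Definition block_t (st : block_state) (c : bool) : block_state :=
  match st with
  | inl (i, buf) => if size (rcons buf c) < K then inl (i, rcons buf c)
                    else block_enter (next i (rcons buf c))
  | inr a => inr (tA a c)
  end.

Definition block_o (st : block_state) (c : bool) : seq bool :=
  match st with
  | inl (i, buf) => if size (rcons buf c) < K then [::] else emit i (rcons buf c)
  | inr a => oA a c
  end.

Lemma block_read i x :
  state_at (inl (i, [::])) block_t x K = block_enter (next i (pref K x)) /\
  out_prefix (inl (i, [::])) block_t block_o x K = emit i (pref K x).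
Proof.
have buffering k : k < K -> state_at (inl (i, [::])) block_t x k = inl (i, pref k x) /\
    out_prefix (inl (i, [::])) block_t block_o x k = [::].
  elim: k => [|k IHk] lt_kK //; have [state_k out_k] := IHk (ltnW lt_kK).
  by rewrite out_prefixS /= state_k out_k /= -prefS size_pref lt_kK.
have lt_K : K.-1 < K by rewrite ltn_predL.
have [state_k out_k] := buffering K.-1 lt_K.
rewrite -[in state_at _ _ _ K](prednK K_gt0) -[in out_prefix _ _ _ _ K](prednK K_gt0).
by rewrite out_prefixS /= state_k out_k /= -prefS prednK // size_pref ltnn.
Qed.

Lemma outputs_block_read i x w :
  transducer_outputs (block_enter (next i (pref K x))) block_t block_o (shift K x) w ->
  transducer_outputs (inl (i, [::])) block_t block_o x (prepend (emit i (pref K x)) w).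
Proof.
have [state_K out_K] := block_read i x.
by rewrite -state_K -out_K; apply: outputs_prepend.
Qed.

End BlockMachine.

Lemma block_rational (I A : finType) (tA : A -> bool -> A) (oA : A -> bool -> seq bool)
    K next emit (i0 : I) (f : cantor -> cantor) : 0 < K ->
  (forall x, transducer_outputs (inl (i0, [::])) (block_t tA K next) (block_o oA K emit) x (f x)) ->
  rational_map f.
Proof.
move=> K_gt0; apply: (rational_of_closed_states
  (states := [seq inl (i, p) | i <- enum I, p <- short_words K] ++ map inr (enum A))).
  by rewrite mem_cat allpairs_f ?mem_enum ?mem_short_words.
have mem_states (st : block_state I A) :
    (if st is inl (_, p) then size p < K else true) ->
    st \in [seq inl (i, p) | i <- enum I, p <- short_words K] ++ map inr (enum A).
  case: st => [[i p]|a] ok; rewrite mem_cat; last by rewrite map_f ?mem_enum ?orbT.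
  by rewrite allpairs_f ?mem_enum ?mem_short_words.
move=> st c st_in; apply: mem_states.
move: st_in; rewrite mem_cat => /orP[/allpairsP[[i p] [_ _ ->]] | /mapP[a _ ->]] //=.
by case: ifP => // _; case: next.
Qed.

Lemma prefix_rewrite_rational K (P : seq bool -> seq bool) : 0 < K ->
  rational_map (fun x => prepend (P (pref K x)) (shift K x)).
Proof.
move=> K_gt0; apply: (@block_rational unit unit (fun _ _ => tt) (fun _ c => [:: c]) K
  (fun _ _ => inr tt) (fun _ => P) tt) => // x.
apply: outputs_block_read => //; exact: outputs_copy.
Qed.

Definition slide (a b : seq bool) (x : cantor) : cantor :=
  if pref (size a) x == a then
    if pref (size b) (shift (size a) x) == b then prepend b (prepend a (shift (size a + size b) x))
    else shift (size a) x
  else prepend b x.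

Definition slide_word (a b p : seq bool) : seq bool :=
  if take (size a) p == a then (if drop (size a) p == b then b ++ a else drop (size a) p)
  else b ++ p.

Lemma slideE a b :
  slide a b = fun x => prepend (slide_word a b (pref (size a + size b) x))
                               (shift (size a + size b) x).
Proof.
apply: functional_extensionality => x.
rewrite /slide /slide_word pref_add take_size_cat ?size_pref // drop_size_cat ?size_pref //.
case: eqP => _; last by rewrite -!prepend_cat -shift_shift !prepend_pref_shift.
by case: eqP => _; rewrite ?prepend_cat // -shift_shift prepend_pref_shift.
Qed.

Lemma slide_rational a b : 0 < size a + size b -> rational_map (slide a b).
Proof.
by move=> gt0; rewrite slideE; apply: prefix_rewrite_rational.
Qed.

Lemma slideK a b : cancel (slide a b) (slide b a).
Proof.
move=> x; rewrite {2}/slide; case: eqP => [xa | /eqP xNa].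
  case: eqP => [xb | /eqP xNb].
    rewrite /slide pref_prepend // eqxx -shift_shift shift_prepend // pref_prepend // eqxx.
    by rewrite -shift_shift !shift_prepend // !prepend_shift_pref.
  by rewrite /slide (negbTE xNb) prepend_shift_pref.
by rewrite /slide pref_prepend // eqxx shift_prepend // (negbTE xNa).
Qed.

Lemma slide_in_R a b : 0 < size a + size b -> in_R (slide a b).
Proof.
move=> gt0; have gt0' : 0 < size b + size a by rewrite addnC.
split; last exact: slide_rational.
split; first exact/continuous_of_rational/slide_rational.
exists (slide b a); split; first exact/continuous_of_rational/slide_rational.
by split=> x i; rewrite slideK.
Qed.

Lemma modulus_of_local_eq L (f g : cantor -> cantor) x n :
  (forall y, pref L y = pref L x -> f y = g y) ->
  (exists m, forall y, agree m x y -> agree n (g x) (g y)) ->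
  exists m, forall y, agree m x y -> agree n (f x) (f y).
Proof.
move=> fg [m gxy]; exists (maxn L m) => y xy.
rewrite !fg -?(pref_agree (leq_maxl L m) xy) //.
exact/gxy/(agree_le (leq_maxr L m)).
Qed.

Lemma compl_stable_of_fixed (T : Type) (P : T -> Prop) (f g : T -> T) :
  cancel f g -> (forall x, P x -> f x = x) -> forall x, ~ P x -> ~ P (f x).
Proof.
by move=> fK f_fix x NPx Pfx; apply: NPx; have := congr1 g (f_fix _ Pfx); rewrite !fK => <-.
Qed.

Section Tower.

Variables (L : nat) (u w : seq bool).
Hypotheses (L_gt0 : 0 < L) (size_u : size u = L) (size_w : size w = L) (u_neq_w : u != w).

Fixpoint tower_approx (F : cantor -> cantor) (n : nat) (x : cantor) : cantor :=
  if n is n'.+1 then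
    if pref L x == u then prepend u (tower_approx F n' (shift L x))
    else if pref L x == w then x else F x
  else x.

(* [tower F] maps [u ++ ... ++ u ++ y], with [y] starting neither with [u] nor with [w],
   to [u ++ ... ++ u ++ F y] and fixes every other sequence; its [i]-th letter is
   already decided by [i.+1] unfoldings. *)
Definition tower (F : cantor -> cantor) (x : cantor) : cantor :=
  fun i => tower_approx F i.+1 x i.

Definition tower1 (F : cantor -> cantor) (x : cantor) : cantor :=
  if pref L x == u then tower F x else x.

Definition on_uw (x : cantor) : Prop := pref L x = u \/ pref L x = w.

Lemma tower_approx_stable F n1 n2 x i :
  i < n1 -> i < n2 -> tower_approx F n1 x i = tower_approx F n2 x i.
Proof.
elim: n1 n2 x i => [|n1 IHn] [|n2] x i //= lt_i1 lt_i2.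
case: ifP => // _; rewrite /prepend size_u; case: ltnP => // le_Li.
by apply: IHn; lia.
Qed.

Lemma tower_u F x : pref L x = u -> tower F x = prepend u (tower F (shift L x)).
Proof.
move=> xu; apply: functional_extensionality => i.
rewrite [LHS]/tower /= xu eqxx /prepend size_u; case: ltnP => // le_Li.
by apply: tower_approx_stable; lia.
Qed.

Lemma tower_w F x : pref L x = w -> tower F x = x.
Proof.
move=> xw; apply: functional_extensionality => i.
by rewrite /tower /= xw eqxx eq_sym (negbTE u_neq_w).
Qed.

Lemma tower_other F x : ~ on_uw x -> tower F x = F x.
Proof.
move=> x_off; apply: functional_extensionality => i; rewrite /tower /=.
case: (pref L x =P u) => [xu | _]; first by case: x_off; left.
by case: (pref L x =P w) => [xw | _] //; case: x_off; right.
Qed.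

Lemma tower_continuous F : cantor_continuous F -> cantor_continuous (tower F).
Proof.
move=> F_cont x n; elim/ltn_ind: n x => -[_ x | n IHn x]; first by exists 0.
case: (pref L x =P u) => [xu | xNu].
  apply: (modulus_of_local_eq (L := L) (g := fun y => prepend u (tower F (shift L y)))).
    by move=> y; rewrite xu; apply: tower_u.
  have lt_n : n.+1 - L < n.+1 by rewrite ltn_subrL L_gt0.
  have [m shift_xy] := IHn _ lt_n (shift L x).
  exists (L + m) => y /agree_shift/shift_xy xy i lt_i.
  by rewrite /prepend size_u; case: ltnP => // le_Li; apply: xy; lia.
case: (pref L x =P w) => [xw | xNw].
  apply: (modulus_of_local_eq (L := L) (g := id)) => [y|]; last by exists n.+1.
  by rewrite xw; apply: tower_w.
apply: (modulus_of_local_eq (L := L) (g := F)) => [y yx|]; last exact: F_cont.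
by apply: tower_other; rewrite /on_uw yx => -[/xNu | /xNw].
Qed.

Lemma tower1_continuous F : cantor_continuous F -> cantor_continuous (tower1 F).
Proof.
move=> F_cont x n; case: (pref L x =P u) => [xu | /eqP/negbTE xNu].
  apply: (modulus_of_local_eq (L := L) (g := tower F)); last exact: tower_continuous.
  by move=> y yx; rewrite /tower1 yx xu eqxx.
apply: (modulus_of_local_eq (L := L) (g := id)) => [y yx|]; last by exists n.
by rewrite /tower1 yx xNu.
Qed.

Lemma towerK F G : cancel G F -> (forall x, ~ on_uw x -> ~ on_uw (G x)) ->
  cancel (tower G) (tower F).
Proof.
move=> GK G_off x; apply: functional_extensionality => i; elim/ltn_ind: i x => i IHi x.
case: (pref L x =P u) => [xu | xNu].
  rewrite (tower_u G xu) tower_u ?pref_prepend // shift_prepend //.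
  rewrite -{2}(prepend_shift_pref xu) /prepend size_u; case: ltnP => // le_Li.
  by apply: IHi; lia.
case: (pref L x =P w) => [xw | xNw]; first by rewrite !(tower_w _ xw).
have x_off : ~ on_uw x by move=> [/xNu | /xNw].
by rewrite (tower_other G x_off) (tower_other F (G_off x x_off)) GK.
Qed.

Lemma tower1K F G : cancel G F -> (forall x, ~ on_uw x -> ~ on_uw (G x)) ->
  cancel (tower1 G) (tower1 F).
Proof.
move=> GK G_off x; rewrite {2}/tower1; case: eqP => [xu | /eqP/negbTE xNu].
  by rewrite /tower1 (tower_u G xu) pref_prepend // eqxx -(tower_u G xu) towerK.
by rewrite /tower1 xNu.
Qed.

Section TowerMachine.

Variables (S : finType) (s0 : S) (t : S -> bool -> S) (o : S -> bool -> seq bool).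
Variable F : cantor -> cantor.
Hypothesis out_F : forall x, transducer_outputs s0 t o x (F x).

Definition inner_t (a : option S) (c : bool) : option S := omap (t^~ c) a.

Definition inner_o (a : option S) (c : bool) : seq bool :=
  if a is Some s then o s c else [:: c].

(* The phase [ph] is [true] once a block [u] has been read. The block that starts the
   argument of [F] has already been consumed, so the machine of [F] is restarted in the
   state it reaches on that block, which does not depend on the padding. *)
Definition tower_next (ph : bool) (p : seq bool) : bool + option S :=
  if p == u then inl true
  else if ~~ ph || (p == w) then inr None
  else inr (Some (state_at s0 t (prepend p (fun=> false)) L)).

Definition tower_emit (ph : bool) (p : seq bool) : seq bool :=
  if p == u then u
  else if ~~ ph || (p == w) then p
  else out_prefix s0 t o (prepend p (fun=> false)) L.

Local Notation tower_t := (block_t inner_t L tower_next).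
Local Notation tower_o := (block_o inner_o L tower_emit).

Lemma outputs_inner_copy x : transducer_outputs (inr None) tower_t tower_o x x.
Proof. exact: outputs_copy. Qed.

Lemma outputs_tower x : transducer_outputs (inl (true, [::])) tower_t tower_o x (tower F x).
Proof.
apply: (outputs_coind (P := fun st y v => st = inl (true, [::]) /\ v = tower F y)) => //.
move=> _ y _ [-> ->].
have [state_L out_L] := block_read inner_t inner_o tower_next tower_emit L_gt0 true y.
case: (pref L y =P u) => [yu | yNu].
  right; exists L, (tower F (shift L y)).
  rewrite out_L state_L /tower_emit /tower_next yu eqxx size_u (tower_u _ yu).
  by split.
left; case: (pref L y =P w) => [yw | yNw].
  have emit_y : tower_emit true (pref L y) = pref L y.
    by rewrite /tower_emit yw eqxx eq_sym (negbTE u_neq_w).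
  rewrite (tower_w _ yw) -{2}(prepend_pref_shift L y) -emit_y; apply: outputs_block_read => //.
  by rewrite /tower_next yw eqxx eq_sym (negbTE u_neq_w); apply: outputs_inner_copy.
have [yNu' yNw'] := (introF eqP yNu, introF eqP yNw).
have [w' [Fy out_w']] := outputs_shift L (out_F y).
have y_pad := agree_prepend_pref (n := L) y (fun=> false).
have emit_y : tower_emit true (pref L y) = out_prefix s0 t o y L.
  by rewrite /tower_emit yNu' yNw' (out_prefix_agree t o s0 y_pad).
have y_off : ~ on_uw y by move=> [/yNu | /yNw].
rewrite (tower_other F y_off) Fy -emit_y; apply: outputs_block_read => //.
rewrite /tower_next yNu' yNw' -(state_at_agree t s0 y_pad (leqnn L)).
exact: (@outputs_morph _ _ t o tower_t tower_o (fun s => inr (Some s))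
  (fun _ _ => erefl) (fun _ _ => erefl) _ _ _).2.
Qed.

Lemma tower1_rational : rational_map (tower1 F).
Proof.
apply: (block_rational (tA := inner_t) (oA := inner_o) (next := tower_next)
  (emit := tower_emit) (i0 := false)) L_gt0 _ => x.
case: (pref L x =P u) => [xu | /eqP/negbTE xNu].
  have emit_x : tower_emit false (pref L x) = u by rewrite /tower_emit xu eqxx.
  rewrite /tower1 xu eqxx (tower_u _ xu) -emit_x; apply: outputs_block_read => //.
  by rewrite /tower_next xu eqxx; apply: outputs_tower.
have emit_x : tower_emit false (pref L x) = pref L x by rewrite /tower_emit xNu.
rewrite /tower1 xNu -{2}(prepend_pref_shift L x) -emit_x; apply: outputs_block_read => //.
by rewrite /tower_next xNu; apply: outputs_inner_copy.
Qed.

End TowerMachine.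

Lemma tower1_slide f :
  (forall x, on_uw x -> f x = x) -> (forall x, ~ on_uw x -> ~ on_uw (f x)) ->
  forall x, tower1 f (slide w u x) = slide w u (tower1 f (f x)).
Proof.
move=> f_fix f_off x.
have pref_u y : pref L (prepend u y) = u by rewrite pref_prepend.
have shift_u y : shift L (prepend u y) = y by rewrite shift_prepend.
have slide_off y : pref L y <> w -> slide w u y = prepend u y.
  by move=> /eqP/negbTE yNw; rewrite /slide size_w yNw.
have tower1_u y : tower1 f (prepend u y) = prepend u (tower f y).
  by rewrite /tower1 pref_u eqxx tower_u ?shift_u.
have w_neq_u : (w == u) = false by rewrite eq_sym (negbTE u_neq_w).
case: (pref L x =P w) => [xw | xNw].
  rewrite f_fix; last by right.
  have -> : tower1 f x = x by rewrite /tower1 xw w_neq_u.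
  rewrite /slide size_w size_u xw eqxx; case: eqP => [xu | /eqP/negbTE xNu].
    by rewrite tower1_u tower_w // pref_prepend.
  by rewrite /tower1 xNu.
case: (pref L x =P u) => [xu | xNu].
  rewrite f_fix; last by left.
  rewrite slide_off // tower1_u /tower1 xu eqxx slide_off //.
  by rewrite (tower_u _ xu) pref_u; apply/eqP.
have x_off : ~ on_uw x by move=> [/xNu | /xNw].
have fx_off := f_off x x_off.
rewrite slide_off // tower1_u (tower_other _ x_off) /tower1.
case: eqP => [fxu | _]; first by case: fx_off; left.
by rewrite slide_off // => fxw; apply: fx_off; right.
Qed.

Lemma commutator_of_fixed_cylinders f :
  in_R f -> (forall x, on_uw x -> f x = x) -> is_R_commutator f.
Proof.
move=> [[f_cont [fi [fi_cont [fiK fK]]]] [S [s0 [t [o out_f]]]]] f_fix.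
have {}fiK : cancel f fi by move=> x; apply: functional_extensionality; apply: fiK.
have {}fK : cancel fi f by move=> x; apply: functional_extensionality; apply: fK.
have fi_fix x : on_uw x -> fi x = x by move=> /f_fix fx; rewrite -{1}fx fiK.
have f_off := compl_stable_of_fixed fiK f_fix.
have hK := tower1K fiK f_off.
have hiK := tower1K fK (compl_stable_of_fixed fK fi_fix).
have slide_gt0 : 0 < size w + size u by rewrite size_w addn_gt0 L_gt0.
exists (tower1 f), (slide w u), (tower1 fi), (slide u w); split.
- split; last exact: tower1_rational out_f.
  split; first exact (tower1_continuous f_cont).
  exists (tower1 fi); split; first exact (tower1_continuous fi_cont).
  by split=> x i; rewrite ?hK ?hiK.
- exact: slide_in_R.
- by split=> x i; rewrite ?hK ?hiK.
- by split=> x i; rewrite slideK.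
- by move=> x i; rewrite tower1_slide // slideK hK.
Qed.

End Tower.

Lemma small_support_fixes_cylinder f :
  small_support f -> exists p, forall x, pref (size p) x = p -> f x = x.
Proof.
move=> [E [[_ E_co] _ [y Ey] f_fix]]; have [n yNE] := E_co y Ey.
exists (pref n y) => x; rewrite size_pref => xy.
by apply: functional_extensionality; apply/f_fix/yNE/agree_pref.
Qed.

Theorem lemma2p7 (f : cantor -> cantor) :
  in_R f -> small_support f -> in_commutator_subgroup f.
Proof.
move=> f_R /small_support_fixes_cylinder [p p_fix].
have pref_rcons b x : pref (size p).+1 x = rcons p b -> pref (size p) x = p.
  by rewrite prefS => /rcons_inj[].
apply: (@comm_step f id f); [exact: comm_id | | by []].
apply: (@commutator_of_fixed_cylinders (size p).+1 (rcons p true) (rcons p false)) => //.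
- by rewrite size_rcons.
- by rewrite size_rcons.
- by apply/eqP => /rcons_inj[].
- by move=> x [] /pref_rcons /p_fix.
Qed.
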